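(* Let $(S,M)$ be a surface with marked points and empty boundary. (a) If $(S,M)$ is not a sphere with $4$ or $5$ punctures, it has an ideal triangulation satisfying (T4). (b) If $(S,M)$ is a sphere with $5$ punctures, it has an ideal triangulation satisfying (T3$\tfrac12$), but no ideal triangulation satisfying (T4). (c) If $(S,M)$ is a sphere with $4$ punctures, it has an ideal triangulation satisfying (T3), but no ideal triangulation satisfying (T3$\tfrac12$).
   Context: $(S,M)$: $S$ compact, connected, oriented surface without boundary, $M$ a finite non-empty set of punctures, admitting ideal triangulations (not a sphere with fewer than four punctures). Arcs incident to a puncture are counted with multiplicity (an arc with both endpoints at the puncture counts twice). (T3): at each puncture at least three arcs of $T$ are incident. (T3$\tfrac12$): $T$ has (T3) and every arc of $T$ has an endpoint with at least four incident arcs. (T4): at each puncture at least four arcs of $T$ are incident. *)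

From mathcomp Require Import all_boot.
Set Implicit Arguments. Unset Strict Implicit. Unset Printing Implicit Defensive.

(* Combinatorial encoding of an ideal triangulation of a punctured closed
   oriented surface as an oriented gluing of triangles (a combinatorial map).
   D      : darts = sides of the (oriented) triangles;
   face d : the next side of the triangle containing d (counterclockwise);
   edge d : the side glued to d (with opposite orientation).
   The tail of a dart is a puncture; the tail of [face (edge d)] equals the
   tail of [d], and the orbits of [rot] are exactly the punctures. *)

Definition rot (D : finType) (face edge : D -> D) : D -> D :=
  fun d => face (edge d).

Definition nb_punctures (D : finType) (face edge : D -> D) : nat :=
  fcard (rot face edge) D.

(* number of arcs incident to the puncture at the tail of d, counted with
   multiplicity (a loop counts twice) *)
Definition valence (D : finType) (face edge : D -> D) (d : D) : nat :=
  order (rot face edge) d.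

Definition ideal_triangulation (D : finType) (face edge : D -> D)
  (g p : nat) : Prop :=
  [/\ (forall d, face (face (face d)) = d),
      (forall d, face d != d),
      (forall d, edge (edge d) = d),
      (forall d, edge d != d) &
      (forall x y : D, connect (fun a b => (b == face a) || (b == edge a)) x y)]
  /\ nb_punctures face edge = p
  (* Euler characteristic: V - E + F = 2 - 2g *)
  /\ p + #|D| %/ 3 + 2 * g = #|D| %/ 2 + 2.

Definition T3 (D : finType) (face edge : D -> D) : Prop :=
  forall d, 3 <= valence face edge d.

Definition T3half (D : finType) (face edge : D -> D) : Prop :=
  T3 face edge /\
  forall d, 4 <= valence face edge d \/ 4 <= valence face edge (edge d).

Definition T4 (D : finType) (face edge : D -> D) : Prop :=
  forall d, 4 <= valence face edge d.

(* Euler's formula for a triangulation with [n] darts ([3F = 2E = n]) reads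
   [n + 12 = 6 (p + 2 g)], and [n] is also the sum of the valences of the
   [p] punctures.  On a sphere, (T4) thus forces [4 p <= 6 p - 12], i.e.
   [p >= 6], and with four punctures (T3) forces every valence to be exactly
   [3], so that (T3 1/2) fails.  Conversely, small explicit triangulations (the
   once-punctured torus, the octahedron, the triangular bipyramid and the
   tetrahedron) settle the base cases, and two local moves preserve (T4)
   because valences of old punctures never decrease: gluing a one-holed torus
   into a triangle raises the genus, and coning off the quadrilateral around an
   edge between two distinct triangles adds a puncture of valence four. *)

From HB Require Import structures.
From mathcomp Require Import all_boot zify.
Set Implicit Arguments. Unset Strict Implicit. Unset Printing Implicit Defensive.

Lemma connect_homo (T T' : finType) (e : rel T) (e' : rel T') (h : T -> T') :
  {homo h : x y / e x y >-> connect e' x y} ->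
  {homo h : x y / connect e x y >-> connect e' x y}.
Proof.
move=> he x y /connectP [p e_p ->]; elim: p x e_p => //= z p IHp x /andP [exz /IHp].
exact: connect_trans (he _ _ exz).
Qed.

Lemma fconnect_iter_eq (T : finType) (f : T -> T) n x y :
  iter n f x = y -> fconnect f x y.
Proof. by move=> <-; apply: fconnect_iter. Qed.
Arguments fconnect_iter_eq {T f} n {x y}.

Definition redirect (T : eqType) (T' : Type) (s : seq T) (t : seq T') (f : T -> T')
  (d : T) : T' := nth (f d) t (index d s).
Arguments redirect : simpl never.

Lemma redirect_nth (T : eqType) (T' : Type) (s : seq T) (t : seq T') f d0 i :
  uniq s -> i < size s -> redirect s t f (nth d0 s i) = nth (f (nth d0 s i)) t i.
Proof. by move=> uniq_s lt_i_s; rewrite /redirect index_uniq. Qed.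

Lemma redirect_notin (T : eqType) (T' : Type) (s : seq T) (t : seq T') f d :
  size t <= size s -> d \notin s -> redirect s t f d = f d.
Proof. by move=> le_t_s d_notin; rewrite /redirect memNindex // nth_default. Qed.

Lemma uniq_map_nth (T : eqType) (x0 : T) (s : seq T) (js : seq nat) :
  uniq s -> all (gtn (size s)) js -> uniq js -> uniq [seq nth x0 s j | j <- js].
Proof.
move=> uniq_s /allP js_lt uniq_js; rewrite map_inj_in_uniq // => i j i_js j_js.
by move/eqP; rewrite (nth_uniq x0 (js_lt i i_js) (js_lt j j_js) uniq_s) => /eqP.
Qed.
Arguments uniq_map_nth {T} x0 {s} js.

Lemma nth_notin_map (T : eqType) (x0 : T) (s : seq T) i (js : seq nat) :
  uniq s -> i < size s -> all (gtn (size s)) js -> i \notin js ->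
  nth x0 s i \notin [seq nth x0 s j | j <- js].
Proof.
move=> uniq_s i_lt /allP js_lt; apply: contra => /mapP [j j_js /eqP].
by rewrite (nth_uniq x0 i_lt (js_lt j j_js) uniq_s) => /eqP ->.
Qed.
Arguments nth_notin_map {T} x0 {s} i js.

(** * Orbits of a permutation *)

Section OrbitCounting.
Variables (T : finType) (f : T -> T).
Hypothesis f_inj : injective f.

Let f_sym : connect_sym (frel f) := fconnect_sym f_inj.

Lemma order_connect x y : fconnect f x y -> order f x = order f y.
Proof. by move=> fxy; apply: eq_card => z; apply: (same_connect f_sym fxy). Qed.

Lemma fcard_froots : fcard f T = #|froots f|.
Proof. by apply: eq_card => x; rewrite !inE andbT. Qed.

Lemma card_sum_order : #|T| = \sum_(r in froots f) order f r.
Proof.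
rewrite -sum1_card (partition_big (froot f) (froots f)) /=; last first.
  by move=> x _; apply: roots_root.
apply: eq_bigr => r /eqP r_root; rewrite sum1_card; apply: eq_card => x.
rewrite !inE; apply/eqP/idP => [<- | /(rootP f_sym) <-] //.
by rewrite f_sym; apply: connect_root.
Qed.

Lemma leq_mul_fcard k : (forall x, k <= order f x) -> k * fcard f T <= #|T|.
Proof.
move=> k_le; rewrite card_sum_order fcard_froots mulnC -sum_nat_const.
exact: (leq_sum _ (fun r _ => k_le r)).
Qed.

Lemma leq_order_fcard k x :
  (forall y, k <= order f y) -> order f x + k * (fcard f T).-1 <= #|T|.
Proof.
move=> k_le; set r := froot f x.
have r_root : froots f r by apply: roots_root.
rewrite (order_connect (connect_root _ x)) card_sum_order (bigD1 r) //=.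
rewrite leq_add2l fcard_froots (cardD1 r) [r \in _]r_root /= mulnC.
rewrite -sum_nat_const (eq_bigl (fun i => (i \in froots f) && (i != r))).
  by apply: leq_sum => y _; apply: k_le.
by move=> i; rewrite !inE andbC.
Qed.

Section CompleteInvariant.
Variables (K : finType) (lab : T -> K).
Hypothesis lab_f : forall x, lab (f x) = lab x.
Hypothesis lab_connect : forall x y, lab x = lab y -> fconnect f x y.

Lemma connect_lab x y : fconnect f x y -> lab x = lab y.
Proof. by apply: fconnect_invariant => z; rewrite /invariant inE lab_f eqxx. Qed.

Lemma order_lab x : order f x = #|[pred y | lab y == lab x]|.
Proof.
apply: eq_card => y; rewrite !inE.
by apply/idP/eqP => [/connect_lab -> | /esym /lab_connect].
Qed.

Lemma fcard_lab : fcard f T = #|[set lab x | x in T]|.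
Proof.
have -> : [set lab x | x in T] = lab @: froots f.
  apply/setP => c; apply/imsetP/imsetP => [[x _ ->] | [x _ ->]]; last by exists x.
  exists (froot f x); first exact: roots_root.
  exact: connect_lab (connect_root _ x).
rewrite fcard_froots card_in_imset // => x y /eqP x_root /eqP y_root.
by move/lab_connect/(rootP f_sym); rewrite x_root y_root.
Qed.
End CompleteInvariant.
End OrbitCounting.

(** * Triangulations as combinatorial maps *)

Definition dart_rel (D : finType) (face edge : D -> D) : rel D :=
  fun a b => (b == face a) || (b == edge a).

Section Triangulation.
Variables (D : finType) (face edge : D -> D).
Hypothesis face3 : forall d, face (face (face d)) = d.
Hypothesis face_neq : forall d, face d != d.
Hypothesis edgeK : involutive edge.
Hypothesis edge_neq : forall d, edge d != d.

Lemma face_inj : injective face.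
Proof. by apply: (can_inj (g := face \o face)) => d; apply: face3. Qed.

Lemma fconnect_face_r a d : fconnect face a (face d) = fconnect face a d.
Proof. by rewrite -same_fconnect1_r //; apply: face_inj. Qed.

Lemma rot_inj : injective (rot face edge).
Proof. by move=> a b /face_inj /(inv_inj edgeK). Qed.

Lemma uniq_triangle d : uniq [:: d; face d; face (face d)].
Proof.
have ffd : face (face d) != d.
  by apply: contraNneq (face_neq d) => ffd; rewrite -{1}ffd face3.
rewrite /= !inE !negb_or !andbT (eq_sym d) face_neq (eq_sym d) ffd.
by rewrite (inj_eq face_inj) eq_sym face_neq.
Qed.

Lemma order_face d : order face d = 3.
Proof.
have cycle_d : fcycle face [:: d; face d; face (face d)] by rewrite /= face3 !eqxx.
by rewrite (order_cycle cycle_d (uniq_triangle d)) // inE eqxx.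
Qed.

Lemma fconnect_faceE d e : fconnect face d e = (e \in [:: d; face d; face (face d)]).
Proof. by rewrite fconnect_orbit /orbit order_face. Qed.

Lemma order_edge d : order edge d = 2.
Proof.
have cycle_d : fcycle edge [:: d; edge d] by rewrite /= edgeK !eqxx.
have uniq_d : uniq [:: d; edge d] by rewrite /= inE eq_sym edge_neq.
by rewrite (order_cycle cycle_d uniq_d) // inE eqxx.
Qed.

Lemma card_faces : fcard face D * 3 = #|D|.
Proof.
apply: fcard_order_set; first exact: face_inj.
  by apply/subsetP => d _; rewrite inE order_face.
by move=> a b _.
Qed.

Lemma card_edges : fcard edge D * 2 = #|D|.
Proof.
apply: fcard_order_set; first exact: inv_inj.
  by apply/subsetP => d _; rewrite inE order_edge.
by move=> a b _.
Qed.

Lemma leq_mul_nb_punctures k :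
  (forall d, k <= valence face edge d) -> k * nb_punctures face edge <= #|D|.
Proof. exact: leq_mul_fcard rot_inj k. Qed.

Lemma nb_punctures_le_card : nb_punctures face edge <= #|D|.
Proof. by rewrite -[nb_punctures _ _]mul1n; apply: leq_mul_nb_punctures => d; apply: order_gt0. Qed.

Lemma dart_rel_sym : connect_sym (dart_rel face edge).
Proof.
have sym_rel : connect_sym (relU (frel face) (frel edge)).
  by apply: relU_sym; apply: fconnect_sym; [exact: face_inj | exact: inv_inj].
have eq_rel : dart_rel face edge =2 relU (frel face) (frel edge).
  by move=> a b; rewrite /dart_rel /= (eq_sym b (face a)) (eq_sym b (edge a)).
by move=> a b; rewrite !(eq_connect eq_rel).
Qed.

Lemma rot_connect a b : fconnect (rot face edge) a b -> connect (dart_rel face edge) a b.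
Proof.
apply: connect_sub => {}a _ /eqP <-.
by apply: (@connect_trans _ _ (edge a)); apply: connect1; rewrite /dart_rel eqxx ?orbT.
Qed.

Lemma exists_edge_between_triangles (d : D) : exists x, ~~ fconnect face x (edge x).
Proof.
pose A := fconnect face d.
have [|/exists_inPn A_closed] := boolP [exists s in A, edge s \notin A].
  case/exists_inP=> s sA esA; exists s.
  by rewrite -(same_connect (fconnect_sym face_inj) sA).
suff: fcard edge A * 2 = 3 by lia.
rewrite -(order_face d); apply: fcard_order_set; first exact: inv_inj.
  by apply/subsetP => a _; rewrite inE order_edge.
apply: intro_closed; first exact: fconnect_sym (inv_inj edgeK).
by move=> a b /eqP <- aA; move: (A_closed a aA); rewrite negbK.
Qed.
End Triangulation.

Lemma card_darts_euler (D : finType) (face edge : D -> D) g p :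
  ideal_triangulation face edge g p -> #|D| + 12 = 6 * (p + 2 * g).
Proof.
case=> [[face3 face_neq edgeK edge_neq _] [_ euler]].
have := card_faces face3 face_neq; have := card_edges edgeK edge_neq; lia.
Qed.

Lemma card_darts_gt0 (D : finType) (face edge : D -> D) g p :
  ideal_triangulation face edge g p -> 0 < p -> 0 < #|D|.
Proof.
case=> [[face3 _ edgeK _ _] [np _]] p_gt0.
by apply: leq_trans (nb_punctures_le_card face3 edgeK); rewrite np.
Qed.

Lemma T4_sphere_punctures_ge6 (D : finType) (face edge : D -> D) p :
  ideal_triangulation face edge 0 p -> T4 face edge -> 6 <= p.
Proof.
move=> tri T4fe; have := card_darts_euler tri.
case: tri => [[face3 _ edgeK _ _] [<- _]].
have := leq_mul_nb_punctures face3 edgeK T4fe; lia.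
Qed.

Lemma T3_sphere4_valence (D : finType) (face edge : D -> D) d :
  ideal_triangulation face edge 0 4 -> T3 face edge -> valence face edge d = 3.
Proof.
move=> tri T3fe; have := card_darts_euler tri.
case: tri => [[face3 _ edgeK _ _] [np _]]; rewrite /nb_punctures in np.
have := leq_order_fcard (rot_inj face3 edgeK) d T3fe; rewrite np.
by have := T3fe d; rewrite /valence; lia.
Qed.

(** * Local modifications *)

(* [old] embeds the darts of a triangulation into those of a modified one, and
   [lab w] is the old puncture (as an orbit root) at the tail of [w], or [None]
   if [w] starts at a new puncture. *)
Section Extension.
Variables (D D' : finType) (face edge : D -> D) (face' edge' : D' -> D').
Hypotheses (face3 : forall d, face (face (face d)) = d) (edgeK : involutive edge).
Hypotheses (face'3 : forall w, face' (face' (face' w)) = w) (edge'K : involutive edge').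
Local Notation r := (rot face edge).
Local Notation r' := (rot face' edge').
Let r_inj := rot_inj face3 edgeK.
Let r'_inj := rot_inj face'3 edge'K.

Variables (old : D -> D') (lab : D' -> option D).
Hypothesis old_inj : injective old.
Hypothesis old_rot : forall d, fconnect r' (old d) (old (r d)).
Hypothesis lab_old : forall d, lab (old d) = Some (froot r d).
Hypothesis lab_rot : forall w, lab (r' w) = lab w.
Hypothesis lab_Some : forall w c, lab w = Some c -> exists d, fconnect r' w (old d).
Hypothesis lab_None : forall w v, lab w = None -> lab v = None -> fconnect r' w v.

Lemma lab_connect w v : lab w = lab v -> fconnect r' w v.
Proof.
case lab_w: (lab w) => [c|] lab_v; last exact: lab_None.
have [[d wd] [e ve]] := (lab_Some lab_w, lab_Some (esym lab_v)).
have : lab w = lab (old d) := connect_lab lab_rot wd.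
rewrite lab_w lab_old => -[cd].
have : lab v = lab (old e) := connect_lab lab_rot ve.
rewrite -lab_v lab_old => -[ce].
have de : fconnect r d e by apply/(rootP (fconnect_sym r_inj)); rewrite -cd -ce.
have old_homo : {homo old : a b / frel r a b >-> fconnect r' a b}.
  by move=> a b /eqP <-.
have old_de : fconnect r' (old d) (old e) := connect_homo old_homo de.
apply: connect_trans wd _; apply: connect_trans old_de _.
by rewrite fconnect_sym.
Qed.

Lemma valence_old d : valence face edge d <= valence face' edge' (old d).
Proof.
rewrite /valence (order_lab lab_rot lab_connect) /order -(card_imset _ old_inj).
apply/subset_leq_card/subsetP => _ /imsetP [e de ->].
by rewrite inE !lab_old; move/(rootP (fconnect_sym r_inj)): de => ->.
Qed.

Lemma nb_punctures_extension :
  nb_punctures face' edge' = nb_punctures face edge + [exists w, lab w == None].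
Proof.
have froot_rot d : froot r (r d) = froot r d.
  by apply/esym/(rootP (fconnect_sym r_inj))/fconnect1.
have froot_connect d e : froot r d = froot r e -> fconnect r d e.
  by move/(rootP (fconnect_sym r_inj)).
rewrite /nb_punctures (fcard_lab r'_inj lab_rot lab_connect).
rewrite (fcard_lab r_inj froot_rot froot_connect) (cardsD1 None) addnC.
have -> : (None \in [set lab w | w in D']) = [exists w, lab w == None].
  by apply/imsetP/existsP => [[w _ ->] | [w /eqP <-]]; exists w.
congr (_ + _).
have -> : [set lab w | w in D'] :\ None = Some @: [set froot r d | d in D].
  apply/setP => c; rewrite !inE.
  apply/andP/imsetP => [[c_new /imsetP [w _ cw]] | [e /imsetP [d _ ->] ->]].
    subst c; case lab_w: (lab w) c_new => [c'|] // _.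
    have [d wd] := lab_Some lab_w; exists (froot r d); first exact: imset_f.
    by rewrite -lab_w (connect_lab lab_rot wd) lab_old.
  by split=> //; apply/imsetP; exists (old d); rewrite ?lab_old.
exact: card_imset (@Some_inj _).
Qed.

Lemma T4_extension :
  T4 face edge -> (forall w, lab w = None -> 4 <= valence face' edge' w) ->
  T4 face' edge'.
Proof.
move=> T4fe new_T4 w; case lab_w: (lab w) => [c|]; last exact: new_T4.
have [d wd] := lab_Some lab_w.
by rewrite /valence (order_connect r'_inj wd); apply: leq_trans (T4fe d) (valence_old d).
Qed.

Lemma connected_extension :
  (forall d, connect (dart_rel face' edge') (old d) (old (edge d))) ->
  (forall w, lab w = None -> exists d, connect (dart_rel face' edge') (old d) w) ->
  (forall a b, connect (dart_rel face edge) a b) ->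
  forall w v, connect (dart_rel face' edge') w v.
Proof.
move=> old_edge new_reached connected.
have sym' := dart_rel_sym face'3 edge'K.
have old_connect : {homo old : a b / dart_rel face edge a b >-> connect (dart_rel face' edge') a b}.
  move=> a _ /orP [] /eqP ->; last exact: old_edge.
  apply: connect_trans (old_edge a) _; rewrite -{2}[a]edgeK.
  exact/rot_connect/old_rot.
have reached w : exists d, connect (dart_rel face' edge') (old d) w.
  case lab_w: (lab w) => [c|]; last exact: new_reached.
  have [d wd] := lab_Some lab_w; exists d; rewrite sym'; exact: rot_connect.
move=> w v; have [[d dw] [e ev]] := (reached w, reached v).
rewrite sym' in dw; apply: connect_trans dw _; apply: connect_trans _ ev.
exact: (connect_homo old_connect (connected d e)).
Qed.
End Extension.

Inductive dart6 := s0 | s1 | s2 | s3 | s4 | s5.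

Definition dart6_code (a : dart6) : nat :=
  match a with s0 => 0 | s1 => 1 | s2 => 2 | s3 => 3 | s4 => 4 | s5 => 5 end.

Definition dart6_of_code (n : nat) : dart6 :=
  match n with 0 => s0 | 1 => s1 | 2 => s2 | 3 => s3 | 4 => s4 | _ => s5 end.

Lemma dart6_codeK : cancel dart6_code dart6_of_code. Proof. by case. Qed.
HB.instance Definition _ := Countable.copy dart6 (can_type dart6_codeK).
Lemma dart6_enumP : Finite.axiom [:: s0; s1; s2; s3; s4; s5]. Proof. by case. Qed.
HB.instance Definition _ := isFinite.Build dart6 dart6_enumP.

Inductive dart12 := t0 | t1 | t2 | t3 | t4 | t5 | t6 | t7 | t8 | t9 | t10 | t11.

Definition dart12_code (a : dart12) : nat :=
  match a with
  | t0 => 0 | t1 => 1 | t2 => 2 | t3 => 3 | t4 => 4 | t5 => 5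
  | t6 => 6 | t7 => 7 | t8 => 8 | t9 => 9 | t10 => 10 | t11 => 11
  end.

Definition dart12_of_code (n : nat) : dart12 :=
  match n with
  | 0 => t0 | 1 => t1 | 2 => t2 | 3 => t3 | 4 => t4 | 5 => t5
  | 6 => t6 | 7 => t7 | 8 => t8 | 9 => t9 | 10 => t10 | _ => t11
  end.

Lemma dart12_codeK : cancel dart12_code dart12_of_code. Proof. by case. Qed.
HB.instance Definition _ := Countable.copy dart12 (can_type dart12_codeK).
Lemma dart12_enumP :
  Finite.axiom [:: t0; t1; t2; t3; t4; t5; t6; t7; t8; t9; t10; t11].
Proof. by case. Qed.
HB.instance Definition _ := isFinite.Build dart12 dart12_enumP.

Lemma card_dart6 : #|{: dart6}| = 6.
Proof. by rewrite cardT enumT unlock. Qed.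

Lemma card_dart12 : #|{: dart12}| = 12.
Proof. by rewrite cardT enumT unlock. Qed.

(* Five triangles spanning a one-holed torus replace the triangle of [x]; its
   three sides keep their outer gluings, so no puncture appears and the genus
   grows by one. *)
Section Handle.
Variables (D : finType) (face edge : D -> D) (x : D).
Hypothesis face3 : forall d, face (face (face d)) = d.
Hypothesis face_neq : forall d, face d != d.
Hypothesis edgeK : involutive edge.
Hypothesis edge_neq : forall d, edge d != d.

Local Notation y := (face x).
Local Notation z := (face (face x)).
Local Notation D' := (D + dart12)%type.

Definition handle_face_old : D -> D' :=
  redirect [:: x; y; z] [:: inr t10; inr t1; inr t2] (inl \o face).

Definition handle_face (w : D') : D' :=
  match w with
  | inl d => handle_face_old d
  | inr t1 => inr t6 | inr t6 => inl y | inr t2 => inr t8 | inr t8 => inl z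
  | inr t10 => inr t3 | inr t3 => inl x | inr t0 => inr t9 | inr t9 => inr t7
  | inr t7 => inr t0 | inr t4 => inr t5 | inr t5 => inr t11 | inr t11 => inr t4
  end.

Definition handle_edge (w : D') : D' :=
  match w with
  | inl d => inl (edge d)
  | inr t0 => inr t5 | inr t5 => inr t0 | inr t1 => inr t8 | inr t8 => inr t1
  | inr t2 => inr t9 | inr t9 => inr t2 | inr t3 => inr t4 | inr t4 => inr t3
  | inr t6 => inr t11 | inr t11 => inr t6 | inr t7 => inr t10 | inr t10 => inr t7
  end.

Local Notation r := (rot face edge).
Local Notation r' := (rot handle_face handle_edge).

Let uniq_xyz : uniq [:: x; y; z] := uniq_triangle face3 face_neq x.

Lemma handle_face_x : handle_face_old x = inr t10.
Proof. exact: (redirect_nth _ _ x (i := 0) uniq_xyz isT). Qed.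
Lemma handle_face_y : handle_face_old y = inr t1.
Proof. exact: (redirect_nth _ _ x (i := 1) uniq_xyz isT). Qed.
Lemma handle_face_z : handle_face_old z = inr t2.
Proof. exact: (redirect_nth _ _ x (i := 2) uniq_xyz isT). Qed.

Lemma handle_face_out d : ~~ fconnect face x d -> handle_face_old d = inl (face d).
Proof. by rewrite fconnect_faceE //; apply: redirect_notin. Qed.

Local Ltac handle_compute :=
  rewrite /rot /= ?edgeK ?handle_face_x ?handle_face_y ?handle_face_z /= ?face3.

Lemma handle_face3 w : handle_face (handle_face (handle_face w)) = w.
Proof.
case: w => [d|[]]; try by handle_compute.
have [|d_out] := boolP (fconnect face x d).
  by rewrite fconnect_faceE // !inE => /or3P [] /eqP ->; handle_compute.
by do ![rewrite /= handle_face_out ?fconnect_face_r //]; rewrite face3.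
Qed.

Lemma handle_face_neq w : handle_face w != w.
Proof.
case: w => [d|[]] //; have [|d_out] := boolP (fconnect face x d).
  by rewrite fconnect_faceE // !inE => /or3P [] /eqP ->; handle_compute.
by rewrite /= handle_face_out // inj_eq //; exact: inl_inj.
Qed.

Lemma handle_edgeK : involutive handle_edge.
Proof. by case=> [d|[]] //=; rewrite edgeK. Qed.

Lemma handle_edge_neq w : handle_edge w != w.
Proof. by case: w => [d|[]] //=; rewrite inj_eq //; exact: inl_inj. Qed.

Lemma handle_rot_edge e : fconnect r' (inl (edge e)) (inl (face e)).
Proof.
have [|e_out] := boolP (fconnect face x e); last first.
  by apply: (fconnect_iter_eq 1); rewrite /rot /= edgeK handle_face_out.
rewrite fconnect_faceE // !inE => /or3P [] /eqP ->.
- by apply: (fconnect_iter_eq 4); handle_compute.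
- by apply: (fconnect_iter_eq 2); handle_compute.
- by apply: (fconnect_iter_eq 9); handle_compute.
Qed.

Lemma handle_rot_old d : fconnect r' (inl d) (inl (r d)).
Proof. by rewrite -{1}[d]edgeK; apply: handle_rot_edge. Qed.

Definition handle_lab (w : D') : option D :=
  match w with
  | inl d => Some (froot r d)
  | inr (t0 | t10 | t11) => Some (froot r y)
  | inr t1 => Some (froot r z)
  | inr _ => Some (froot r x)
  end.

Lemma handle_lab_rot w : handle_lab (r' w) = handle_lab w.
Proof.
case: w => [d|[]]; try by handle_compute.
have froot_rot e : froot r (r e) = froot r e.
  by apply/esym/(rootP (fconnect_sym (rot_inj face3 edgeK)))/fconnect1.
rewrite -{1}[d]edgeK /= -froot_rot /rot; set e := edge d.
have [|e_out] := boolP (fconnect face x e); last first.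
  by rewrite /= edgeK handle_face_out.
by rewrite fconnect_faceE // !inE => /or3P [] /eqP ->; handle_compute.
Qed.

Lemma handle_reaches_old h : exists d, fconnect r' (inr h) (inl d).
Proof.
case: h.
- by exists y; apply: (fconnect_iter_eq 2).
- by exists z; apply: (fconnect_iter_eq 1).
- by exists x; apply: (fconnect_iter_eq 8).
- by exists x; apply: (fconnect_iter_eq 6).
- by exists x; apply: (fconnect_iter_eq 1).
- by exists x; apply: (fconnect_iter_eq 5).
- by exists x; apply: (fconnect_iter_eq 2).
- by exists x; apply: (fconnect_iter_eq 7).
- by exists x; apply: (fconnect_iter_eq 3).
- by exists x; apply: (fconnect_iter_eq 4).
- by exists y; apply: (fconnect_iter_eq 3).
- by exists y; apply: (fconnect_iter_eq 1).
Qed.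

Lemma handle_reaches w : exists d, fconnect r' w (inl d).
Proof. by case: w => [d|h]; [exists d | apply: handle_reaches_old]. Qed.

Lemma handle_nb_punctures : nb_punctures handle_face handle_edge = nb_punctures face edge.
Proof.
rewrite (nb_punctures_extension face3 edgeK handle_face3 handle_edgeK
  handle_rot_old (lab := handle_lab)) //.
- suff -> : [exists w, handle_lab w == None] = false by rewrite addn0.
  by apply/negbTE/existsP => -[[?|[]]].
- exact: handle_lab_rot.
- by move=> w c _; apply: handle_reaches.
- by case=> [?|[]].
Qed.

Lemma handle_T4 : T4 face edge -> T4 handle_face handle_edge.
Proof.
move=> T4fe; apply: (T4_extension face3 edgeK handle_face3 handle_edgeK (@inl_inj _ _)
  handle_rot_old (lab := handle_lab)) => //.
- exact: handle_lab_rot.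
- by move=> w c _; apply: handle_reaches.
- by case=> [?|[]].
- by case=> [?|[]].
Qed.

Lemma handle_connected :
  (forall a b, connect (dart_rel face edge) a b) ->
  forall w v, connect (dart_rel handle_face handle_edge) w v.
Proof.
apply: (connected_extension edgeK handle_face3 handle_edgeK handle_rot_old
  (lab := handle_lab)) => [w c _ | d | [?|[]]] //; first exact: handle_reaches.
by apply: connect1; rewrite /dart_rel eqxx orbT.
Qed.
End Handle.

(* The edge of [x] borders two distinct triangles; removing it leaves a
   quadrilateral, which is coned off from a new puncture of valence four. *)
Section Subdivision.
Variables (D : finType) (face edge : D -> D) (x : D).
Hypothesis face3 : forall d, face (face (face d)) = d.
Hypothesis face_neq : forall d, face d != d.
Hypothesis edgeK : involutive edge.
Hypothesis edge_neq : forall d, edge d != d.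
Hypothesis x_between : ~~ fconnect face x (edge x).

Local Notation x1 := (face x).
Local Notation x2 := (face (face x)).
Local Notation ex := (edge x).
Local Notation ex1 := (face (edge x)).
Local Notation ex2 := (face (face (edge x))).
Local Notation D' := (D + dart6)%type.

Definition subdiv_face_old : D -> D' :=
  redirect [:: x; x1; ex; ex1] [:: inr s0; inr s2; inr s3; inr s5] (inl \o face).

Definition subdiv_edge_old : D -> D' :=
  redirect [:: x; ex] [:: inr s4; inr s1] (inl \o edge).

Definition subdiv_face (w : D') : D' :=
  match w with
  | inl d => subdiv_face_old d
  | inr s0 => inl x2 | inr s1 => inl x1 | inr s2 => inr s1
  | inr s3 => inl ex2 | inr s4 => inl ex1 | inr s5 => inr s4
  end.

Definition subdiv_edge (w : D') : D' :=
  match w with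
  | inl d => subdiv_edge_old d
  | inr s4 => inl x | inr s1 => inl ex | inr s0 => inr s2 | inr s2 => inr s0
  | inr s3 => inr s5 | inr s5 => inr s3
  end.

Local Notation r := (rot face edge).
Local Notation r' := (rot subdiv_face subdiv_edge).
Local Notation darts := [:: x; x1; x2; ex; ex1; ex2].

Let uniq_darts : uniq darts.
Proof.
have tri := uniq_triangle face3 face_neq.
rewrite (cat_uniq [:: x; x1; x2]) !tri andbT andTb.
apply/hasPn => b; rewrite -!fconnect_faceE // => ex_b; apply: contra x_between => x_b.
by apply: connect_trans x_b _; rewrite fconnect_sym //; exact: face_inj.
Qed.

Let uniq_face_list : uniq [:: x; x1; ex; ex1] :=
  uniq_map_nth x [:: 0; 1; 3; 4] uniq_darts isT isT.
Let uniq_edge_list : uniq [:: x; ex] := uniq_map_nth x [:: 0; 3] uniq_darts isT isT.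

Lemma subdiv_face_x : subdiv_face_old x = inr s0.
Proof. exact: (redirect_nth _ _ x (i := 0) uniq_face_list isT). Qed.
Lemma subdiv_face_x1 : subdiv_face_old x1 = inr s2.
Proof. exact: (redirect_nth _ _ x (i := 1) uniq_face_list isT). Qed.
Lemma subdiv_face_ex : subdiv_face_old ex = inr s3.
Proof. exact: (redirect_nth _ _ x (i := 2) uniq_face_list isT). Qed.
Lemma subdiv_face_ex1 : subdiv_face_old ex1 = inr s5.
Proof. exact: (redirect_nth _ _ x (i := 3) uniq_face_list isT). Qed.

Lemma subdiv_face_x2 : subdiv_face_old x2 = inl x.
Proof.
rewrite /subdiv_face_old redirect_notin //= ?face3 //.
exact: (nth_notin_map x 2 [:: 0; 1; 3; 4] uniq_darts).
Qed.

Lemma subdiv_face_ex2 : subdiv_face_old ex2 = inl ex.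
Proof.
rewrite /subdiv_face_old redirect_notin //= ?face3 //.
exact: (nth_notin_map x 5 [:: 0; 1; 3; 4] uniq_darts).
Qed.

Lemma subdiv_edge_x : subdiv_edge_old x = inr s4.
Proof. exact: (redirect_nth _ _ x (i := 0) uniq_edge_list isT). Qed.
Lemma subdiv_edge_ex : subdiv_edge_old ex = inr s1.
Proof. exact: (redirect_nth _ _ x (i := 1) uniq_edge_list isT). Qed.

Lemma subdiv_face_fixed d :
  d \notin [:: x; x1; ex; ex1] -> subdiv_face_old d = inl (face d).
Proof. exact: redirect_notin. Qed.

Lemma subdiv_edge_fixed d : d \notin [:: x; ex] -> subdiv_edge_old d = inl (edge d).
Proof. exact: redirect_notin. Qed.

Let edge_list_closed d : d \notin [:: x; ex] -> edge d \notin [:: x; ex].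
Proof.
apply: contra; rewrite !inE => /orP [] /eqP; last by move/(inv_inj edgeK) ->; rewrite eqxx.
by move=> <-; rewrite edgeK eqxx orbT.
Qed.

Let out_triangles d :
  ~~ fconnect face x d -> ~~ fconnect face ex d -> d \notin [:: x; x1; ex; ex1].
Proof.
rewrite !fconnect_faceE // !inE !negb_or => /and3P [-> -> _] /and3P [-> -> _].
by [].
Qed.

Let notin_face_list c :
  c \notin [:: x; ex] -> c \notin [:: x1; ex1] -> c \notin [:: x; x1; ex; ex1].
Proof. by rewrite !inE !negb_or => /andP [-> ->] /andP [-> ->]. Qed.

Local Ltac subdiv_compute :=
  do 3 (try rewrite /rot; rewrite /= ?edgeK ?subdiv_edge_x ?subdiv_edge_ex ?subdiv_face_x
    ?subdiv_face_x1 ?subdiv_face_x2 ?subdiv_face_ex ?subdiv_face_ex1 ?subdiv_face_ex2 ?face3).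

Lemma subdiv_face3 w : subdiv_face (subdiv_face (subdiv_face w)) = w.
Proof.
case: w => [d|[]]; try by subdiv_compute.
have [|d_nx] := boolP (fconnect face x d).
  by rewrite fconnect_faceE // !inE => /or3P [] /eqP ->; subdiv_compute.
have [|d_nex] := boolP (fconnect face ex d).
  by rewrite fconnect_faceE // !inE => /or3P [] /eqP ->; subdiv_compute.
by do ![rewrite /= subdiv_face_fixed ?out_triangles ?fconnect_face_r //]; rewrite face3.
Qed.

Lemma subdiv_face_neq w : subdiv_face w != w.
Proof.
case: w => [d|[]] //; have [d_in|d_out] := boolP (d \in [:: x; x1; ex; ex1]).
  by rewrite !inE in d_in; case/or4P: d_in => /eqP ->; subdiv_compute.
by rewrite /= subdiv_face_fixed // inj_eq //; exact: inl_inj.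
Qed.

Lemma subdiv_edgeK : involutive subdiv_edge.
Proof.
case=> [d|[]]; try by subdiv_compute.
have [d_in|d_out] := boolP (d \in [:: x; ex]).
  by rewrite !inE in d_in; case/orP: d_in => /eqP ->; subdiv_compute.
by rewrite /= subdiv_edge_fixed //= subdiv_edge_fixed ?edge_list_closed ?edgeK.
Qed.

Lemma subdiv_edge_neq w : subdiv_edge w != w.
Proof.
case: w => [d|[]] //; have [d_in|d_out] := boolP (d \in [:: x; ex]).
  by rewrite !inE in d_in; case/orP: d_in => /eqP ->; subdiv_compute.
by rewrite /= subdiv_edge_fixed // inj_eq //; exact: inl_inj.
Qed.

Lemma subdiv_rot_fixed c : c \notin [:: x; ex] -> r' (inl (edge c)) = subdiv_face_old c.
Proof.
by move=> c_out; rewrite /rot /= subdiv_edge_fixed ?edge_list_closed ?edgeK.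
Qed.

Lemma subdiv_rot_edge c : fconnect r' (inl (edge c)) (inl (face c)).
Proof.
have [c_in|c_out] := boolP (c \in [:: x; ex]).
  rewrite !inE in c_in; case/orP: c_in => /eqP ->;
    by apply: (fconnect_iter_eq 1); subdiv_compute.
apply: connect_trans (fconnect1 _ _) _; rewrite subdiv_rot_fixed //.
have [c_in'|c_out'] := boolP (c \in [:: x1; ex1]).
  rewrite !inE in c_in'; case/orP: c_in' => /eqP ->;
    by apply: (fconnect_iter_eq 1); subdiv_compute.
by rewrite subdiv_face_fixed ?notin_face_list.
Qed.

Lemma subdiv_rot_old d : fconnect r' (inl d) (inl (r d)).
Proof. by rewrite -{1}[d]edgeK; apply: subdiv_rot_edge. Qed.

Definition subdiv_lab (w : D') : option D :=
  match w with
  | inl d => Some (froot r d)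
  | inr s2 => Some (froot r x2)
  | inr s5 => Some (froot r ex2)
  | inr _ => None
  end.

Lemma subdiv_lab_rot_edge c : subdiv_lab (r' (inl (edge c))) = Some (froot r (face c)).
Proof.
have [c_in|c_out] := boolP (c \in [:: x; ex]).
  by rewrite !inE in c_in; case/orP: c_in => /eqP ->; subdiv_compute.
rewrite subdiv_rot_fixed //.
have [c_in'|c_out'] := boolP (c \in [:: x1; ex1]).
  by rewrite !inE in c_in'; case/orP: c_in' => /eqP ->; subdiv_compute.
by rewrite subdiv_face_fixed ?notin_face_list.
Qed.

Lemma subdiv_lab_rot w : subdiv_lab (r' w) = subdiv_lab w.
Proof.
case: w => [d|[]]; try by subdiv_compute.
rewrite -{1}[d]edgeK subdiv_lab_rot_edge /=; congr Some.
by apply/esym/(rootP (fconnect_sym (rot_inj face3 edgeK)))/fconnect1.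
Qed.

Local Notation new_puncture := [:: inr s0; inr s1; inr s3; inr s4].

Lemma subdiv_new_cycle : fcycle r' new_puncture.
Proof. by subdiv_compute. Qed.

Lemma subdiv_lab_None w : subdiv_lab w = None -> w \in new_puncture.
Proof. by case: w => [d|[]]. Qed.

Lemma subdiv_new_connect w v :
  subdiv_lab w = None -> subdiv_lab v = None -> fconnect r' w v.
Proof.
move=> /subdiv_lab_None w_new /subdiv_lab_None v_new.
exact: connect_cycle subdiv_new_cycle _ _ w_new v_new.
Qed.

Lemma subdiv_reaches w c : subdiv_lab w = Some c -> exists d, fconnect r' w (inl d).
Proof.
case: w => [d|[]] // _; first by exists d.
- by exists x2; apply: (fconnect_iter_eq 1).
- by exists ex2; apply: (fconnect_iter_eq 1).
Qed.

Lemma subdiv_nb_punctures :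
  nb_punctures subdiv_face subdiv_edge = (nb_punctures face edge).+1.
Proof.
rewrite (nb_punctures_extension face3 edgeK subdiv_face3 subdiv_edgeK
  subdiv_rot_old (lab := subdiv_lab)) //.
- suff -> : [exists w, subdiv_lab w == None] by rewrite addn1.
  by apply/existsP; exists (inr s0).
- exact: subdiv_lab_rot.
- exact: subdiv_reaches.
- exact: subdiv_new_connect.
Qed.

Lemma subdiv_T4 : T4 face edge -> T4 subdiv_face subdiv_edge.
Proof.
move=> T4fe; apply: (T4_extension face3 edgeK subdiv_face3 subdiv_edgeK (@inl_inj _ _)
  subdiv_rot_old (lab := subdiv_lab)) => //.
- exact: subdiv_lab_rot.
- exact: subdiv_reaches.
- exact: subdiv_new_connect.
- move=> w /subdiv_lab_None w_new.
  by rewrite /valence (order_cycle subdiv_new_cycle).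
Qed.

Lemma subdiv_connected :
  (forall a b, connect (dart_rel face edge) a b) ->
  forall w v, connect (dart_rel subdiv_face subdiv_edge) w v.
Proof.
apply: (connected_extension edgeK subdiv_face3 subdiv_edgeK subdiv_rot_old
  (lab := subdiv_lab)) => [w c | d | w /subdiv_lab_None w_new].
- exact: subdiv_reaches.
- have [d_in|d_out] := boolP (d \in [:: x; ex]); last first.
    by apply: connect1; rewrite /dart_rel /= subdiv_edge_fixed // eqxx orbT.
  rewrite !inE in d_in; case/orP: d_in => /eqP -> ; apply/connectP.
    exists [:: inr s0; inr s2; inr s1; inl ex];
    by rewrite //= /dart_rel /=; subdiv_compute; rewrite ?eqxx ?orbT.
  exists [:: inr s3; inr s5; inr s4; inl x];
  by rewrite //= /dart_rel /=; subdiv_compute; rewrite ?eqxx ?orbT.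
- exists x; apply: (@connect_trans _ _ (inr s0)).
    by apply: connect1; rewrite /dart_rel /= subdiv_face_x eqxx.
  exact/rot_connect/(connect_cycle subdiv_new_cycle).
Qed.

End Subdivision.

Lemma handle_step (D : finType) (face edge : D -> D) (x : D) g p :
  ideal_triangulation face edge g p ->
  ideal_triangulation (handle_face face x) (handle_edge edge) g.+1 p.
Proof.
case=> [[face3 face_neq edgeK edge_neq connected] [np euler]].
split; [split | split].
- exact: handle_face3.
- exact: handle_face_neq.
- exact: handle_edgeK.
- exact: handle_edge_neq.
- exact: handle_connected.
- by rewrite handle_nb_punctures.
- by rewrite card_sum card_dart12; lia.
Qed.

Lemma subdivision_step (D : finType) (face edge : D -> D) (x : D) g p :
  ~~ fconnect face x (edge x) -> ideal_triangulation face edge g p ->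
  ideal_triangulation (subdiv_face face edge x) (subdiv_edge edge x) g p.+1.
Proof.
move=> x_between [[face3 face_neq edgeK edge_neq connected] [np euler]].
split; [split | split].
- exact: subdiv_face3.
- exact: subdiv_face_neq.
- exact: subdiv_edgeK.
- exact: subdiv_edge_neq.
- exact: subdiv_connected.
- by rewrite subdiv_nb_punctures // np.
- by rewrite card_sum card_dart6; lia.
Qed.

Definition T4_triangulable g p := exists (D : finType) (face edge : D -> D),
  ideal_triangulation face edge g p /\ T4 face edge.

Lemma T4_triangulable_genus g p :
  0 < p -> T4_triangulable g p -> T4_triangulable g.+1 p.
Proof.
move=> p_gt0 [D [face [edge [tri T4fe]]]].
have /card_gt0P [x _] := card_darts_gt0 tri p_gt0.
exists (D + dart12)%type, (handle_face face x), (handle_edge edge).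
split; first exact: handle_step.
by case: tri => [[face3 face_neq edgeK edge_neq _] _]; apply: handle_T4.
Qed.

Lemma T4_triangulable_puncture g p :
  0 < p -> T4_triangulable g p -> T4_triangulable g p.+1.
Proof.
move=> p_gt0 [D [face [edge [tri T4fe]]]].
have /card_gt0P [d _] := card_darts_gt0 tri p_gt0.
case: (tri) => [[face3 face_neq edgeK edge_neq _] _].
have [x x_between] := exists_edge_between_triangles face3 face_neq edgeK edge_neq d.
exists (D + dart6)%type, (subdiv_face face edge x), (subdiv_edge edge x).
by split; [apply: subdivision_step | apply: subdiv_T4].
Qed.

(** * Explicit triangulations *)

Definition ord_mod n (i : nat) : 'I_n.+1 := Ordinal (ltn_pmod i (ltn0Sn n)).

Lemma ord_enumE n : ord_enum n.+1 = [seq ord_mod n i | i <- iota 0 n.+1].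
Proof.
apply: (inj_map val_inj); rewrite val_ord_enum -map_comp -[LHS]map_id.
by apply/eq_in_map => i; rewrite mem_iota /= => i_lt; apply/esym/modn_small.
Qed.

(* [ord_enum] is built with [insub], which does not reduce by computation; this
   enumeration does. *)
Lemma enum_ordS n : Finite.enum 'I_n.+1 = [seq ord_mod n i | i <- iota 0 n.+1].
Proof. by rewrite -ord_enumE unlock. Qed.

(* Dart [3 * k + i] is side [i] of the [k]-th triangle, in counterclockwise
   order, and dart [j] is glued to dart [nth 0 s j]. *)
Definition tab_face n (d : 'I_n.+1) : 'I_n.+1 := ord_mod n (3 * (d %/ 3) + d.+1 %% 3).
Definition tab_edge n (s : seq nat) (d : 'I_n.+1) : 'I_n.+1 := ord_mod n (nth 0 s d).
Arguments tab_face {n}.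

Definition torus_edge : 'I_6 -> 'I_6 := tab_edge [:: 5; 3; 4; 1; 2; 0].

Definition tetrahedron_edge : 'I_12 -> 'I_12 :=
  tab_edge [:: 8; 9; 3; 2; 11; 6; 5; 10; 0; 1; 7; 4].

Definition bipyramid_edge : 'I_18 -> 'I_18 :=
  tab_edge [:: 14; 4; 6; 11; 1; 15; 2; 10; 12; 17; 7; 3; 8; 16; 0; 5; 13; 9].

Definition octahedron_edge : 'I_24 -> 'I_24 := tab_edge
  [:: 20; 4; 6; 11; 1; 21; 2; 10; 12; 17; 7; 3; 8; 16; 18; 23; 13; 9; 14; 22; 0; 5; 19; 15].

Lemma ideal_triangulation_check (D : finType) (face edge : D -> D) (d0 : D) g p :
  [forall d, face (face (face d)) == d] -> [forall d, face d != d] ->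
  [forall d, edge (edge d) == d] -> [forall d, edge d != d] ->
  [forall d, connect (dart_rel face edge) d0 d] ->
  nb_punctures face edge == p -> p + #|D| %/ 3 + 2 * g == #|D| %/ 2 + 2 ->
  ideal_triangulation face edge g p.
Proof.
move=> /forallP face3 /forallP face_neq /forallP edgeK /forallP edge_neq.
move=> /forallP connected /eqP np /eqP euler.
have {}face3 d : face (face (face d)) = d by apply/eqP.
have {}edgeK : involutive edge by move=> d; apply/eqP.
split; [split=> // a b | by []].
by apply: connect_trans (connected b); rewrite dart_rel_sym.
Qed.

Ltac compute_darts :=
  rewrite /nb_punctures /valence /order /n_comp_mem /roots /root /connect /pick
    /rgraph /FiniteQuant.quant0b /pred0b /= ?card.unlock /enum_mem /= ?enum_ordS;
  vm_compute; reflexivity.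

Lemma torus_T4 : ideal_triangulation tab_face torus_edge 1 1 /\ T4 tab_face torus_edge.
Proof.
split; first by apply: (ideal_triangulation_check (d0 := ord0)); compute_darts.
by apply/forallP; compute_darts.
Qed.

Lemma octahedron_T4 :
  ideal_triangulation tab_face octahedron_edge 0 6 /\ T4 tab_face octahedron_edge.
Proof.
split; first by apply: (ideal_triangulation_check (d0 := ord0)); compute_darts.
by apply/forallP; compute_darts.
Qed.

Lemma bipyramid_T3half :
  ideal_triangulation tab_face bipyramid_edge 0 5 /\ T3half tab_face bipyramid_edge.
Proof.
split; first by apply: (ideal_triangulation_check (d0 := ord0)); compute_darts.
split; first by apply/forallP; compute_darts.
have: [forall d, (4 <= valence tab_face bipyramid_edge d) ||
                 (4 <= valence tab_face bipyramid_edge (bipyramid_edge d))].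
  by compute_darts.
by move/forallP => T3half_d d; apply/orP.
Qed.

Lemma tetrahedron_T3 :
  ideal_triangulation tab_face tetrahedron_edge 0 4 /\ T3 tab_face tetrahedron_edge.
Proof.
split; first by apply: (ideal_triangulation_check (d0 := ord0)); compute_darts.
by apply/forallP; compute_darts.
Qed.

Lemma T4_triangulable_add g p k :
  0 < p -> T4_triangulable g p -> T4_triangulable g (p + k).
Proof.
move=> p_gt0 T4gp; elim: k => [|k IHk]; first by rewrite addn0.
by rewrite addnS; apply: T4_triangulable_puncture; rewrite ?ltn_addr.
Qed.

Lemma T4_triangulable_torus g : T4_triangulable g.+1 1.
Proof.
elim: g => [|g IHg]; last exact: T4_triangulable_genus.
by exists 'I_6, tab_face, torus_edge; apply: torus_T4.
Qed.

Theorem proposition5p1 :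
  (* (a) genus g, p >= 1 punctures, not a sphere with <= 5 punctures *)
  (forall g p : nat, 1 <= p -> (1 <= g \/ 6 <= p) ->
     exists (D : finType) (face edge : D -> D),
       ideal_triangulation face edge g p /\ T4 face edge) /\
  (* (b) sphere with 5 punctures *)
  ((exists (D : finType) (face edge : D -> D),
       ideal_triangulation face edge 0 5 /\ T3half face edge) /\
   ~ (exists (D : finType) (face edge : D -> D),
       ideal_triangulation face edge 0 5 /\ T4 face edge)) /\
  (* (c) sphere with 4 punctures *)
  ((exists (D : finType) (face edge : D -> D),
       ideal_triangulation face edge 0 4 /\ T3 face edge) /\
   ~ (exists (D : finType) (face edge : D -> D),
       ideal_triangulation face edge 0 4 /\ T3half face edge)).
Proof.
split; [|split; split].
- move=> g p p_gt0; case: g => [[//|p_ge6]|g _].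
    rewrite -(subnKC p_ge6); apply: T4_triangulable_add => //.
    by exists 'I_24, tab_face, octahedron_edge; apply: octahedron_T4.
  rewrite -(subnKC p_gt0); apply: T4_triangulable_add => //.
  exact: T4_triangulable_torus.
- by exists 'I_18, tab_face, bipyramid_edge; apply: bipyramid_T3half.
- by case=> D [face [edge [tri /(T4_sphere_punctures_ge6 tri)]]].
- by exists 'I_12, tab_face, tetrahedron_edge; apply: tetrahedron_T3.
- case=> D [face [edge [tri [T3fe T3h]]]].
  have /card_gt0P [d _] := card_darts_gt0 tri isT.
  by case: (T3h d); rewrite !(T3_sphere4_valence _ tri).
Qed.
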